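(* Let $\Gamma$ be an antipodal tight graph $\mathrm{AT}4(p,q,2)$ with vertex set $X$, and let $x\in X$. If $W$ is an irreducible $T(x)$-module with endpoint $2$, then $W$ has diameter $0$ and is thin.
   Context: For integers $p\ge 1$, $q\ge 2$, an $\mathrm{AT}4(p,q,2)$ is a non-bipartite distance-regular antipodal double cover of diameter $4$ with intersection array $\{q(pq+p+q),\,(q^2-1)(p+1),\,q(p+q)/2,\,1;\ 1,\,q(p+q)/2,\,(q^2-1)(p+1),\,q(pq+p+q)\}$; such a graph is tight and $Q$-polynomial. Let $A$ be the adjacency matrix, $\partial$ the distance, $V=\mathbb{C}^X$, and for $0\le i\le 4$ let $E^*_i(x)$ be the diagonal matrix with $(E^*_i(x))_{yy}=1$ if $\partial(x,y)=i$ and $0$ otherwise. $T(x)$ is the subalgebra of $\mathrm{Mat}_X(\mathbb{C})$ generated by $A,E^*_0(x),\dots,E^*_4(x)$. For an irreducible $T(x)$-module $W$ (a nonzero $T(x)$-invariant subspace of $V$ with no invariant subspaces other than $0,W$), its endpoint is $\min\{i:E^*_i(x)W\neq0\}$, its diameter is $|\{i:E^*_i(x)W\ne 0\}|-1$, and $W$ is thin if $\dim E^*_i(x)W\le1$ for all $i$. *)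

From HB Require Import structures.
From mathcomp Require Import all_boot all_order all_algebra all_field.
Set Implicit Arguments. Unset Strict Implicit. Unset Printing Implicit Defensive.
Import GRing.Theory Num.Theory.

(* Vectors of V = C^X are row vectors indexed by
   'I_#|X| (via enum_val); a subspace of V is the row space of a square matrix. *)

Section Graph.
Variables (X : finType) (e : rel X).

Fixpoint ball (k : nat) (x : X) : {set X} :=
  match k with
  | 0 => [set x]
  | k'.+1 => ball k' x :|: [set y | [exists z in ball k' x, e z y]]
  end.

(* path distance (for a connected graph; #|X| if unreachable) *)
Definition gdist (x y : X) : nat := find (fun k => y \in ball k x) (iota 0 #|X|).

Definition simple_graph : Prop := symmetric e /\ irreflexive e.

Definition drg_with_array (d : nat) (b c : nat -> nat) : Prop :=
  [/\ simple_graph,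
      (forall x y : X, connect e x y),
      (forall x y : X, gdist x y <= d),
      (exists x y : X, gdist x y = d) &
      (forall (i : nat) (x y : X), gdist x y = i ->
          (i < d -> #|[set z | e y z & gdist x z == i.+1]| = b i) /\
          (0 < i -> #|[set z | e y z & gdist x z == i.-1]| = c i))].

Definition at4_b (p q : nat) (i : nat) : nat :=
  match i with
  | 0 => q * (p * q + p + q)
  | 1 => (q ^ 2 - 1) * (p + 1)
  | 2 => (q * (p + q)) %/ 2
  | 3 => 1
  | _ => 0
  end.
Definition at4_c (p q : nat) (i : nat) : nat :=
  match i with
  | 1 => 1
  | 2 => (q * (p + q)) %/ 2
  | 3 => (q ^ 2 - 1) * (p + 1)
  | 4 => q * (p * q + p + q)
  | _ => 0
  end.

Definition is_AT4 (p q : nat) : Prop :=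
  [/\ 1 <= p, 2 <= q, 2 %| q * (p + q) & drg_with_array 4 (at4_b p q) (at4_c p q)].

Local Open Scope ring_scope.
Local Notation n := #|X|.

Definition adjA : 'M[algC]_n :=
  \matrix_(u, v) (e (enum_val u) (enum_val v))%:R.

Definition Estar (x : X) (i : nat) : 'M[algC]_n :=
  \matrix_(u, v) ((u == v) && (gdist x (enum_val u) == i))%:R.

Inductive in_T (x : X) : 'M[algC]_n -> Prop :=
  | T_A : in_T x adjA
  | T_E i : (i <= 4)%N -> in_T x (Estar x i)
  | T_1 : in_T x 1%:M
  | T_add M N : in_T x M -> in_T x N -> in_T x (M + N)
  | T_scale a M : in_T x M -> in_T x (a *: M)
  | T_mul M N : in_T x M -> in_T x N -> in_T x (M *m N).

(* W (row space) is invariant under the action v |-> M v of every M in T(x)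
   (in row-vector form: w |-> w M^T) *)
Definition T_invariant (x : X) (W : 'M[algC]_n) : Prop :=
  forall M, in_T x M -> (W *m M^T <= W)%MS.

Definition irreducible_T_module (x : X) (W : 'M[algC]_n) : Prop :=
  [/\ W != 0, T_invariant x W &
      forall U : 'M[algC]_n, T_invariant x U -> (U <= W)%MS ->
        U = 0 \/ (U == W)%MS].

Definition EW (x : X) (W : 'M[algC]_n) (i : nat) : 'M[algC]_n := W *m (Estar x i)^T.

Definition endpoint (x : X) (W : 'M[algC]_n) : nat :=
  find (fun i => EW x W i != 0) (iota 0 5).

Definition module_diameter (x : X) (W : 'M[algC]_n) : nat :=
  (size [seq i <- iota 0 5 | EW x W i != 0]).-1.

Definition thin (x : X) (W : 'M[algC]_n) : Prop :=
  forall i, (i <= 4)%N -> (\rank (EW x W i) <= 1)%N.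

End Graph.

(** The intersection array of an AT4(p,q,2) is symmetric, c_i = b_(4-i), so the
    sphere sizes k_i = (b_0...b_(i-1))/(c_1...c_i) give k_4 = 1: every vertex y has a
    unique antipode y' at distance 4, with ∂(x,y') = 0 iff ∂(x,y) = 4 and ∂(x,y') = 1
    iff ∂(x,y) = 3.  Hence conjugation by the distance-4 matrix A_4 maps E*_0(x) to
    E*_4(x) and E*_1(x) to E*_3(x).  The three-term recurrence for the distance
    matrices makes A_4 a polynomial in A, so A_4 lies in T(x), and a module W with
    E*_0 W = E*_1 W = 0 also has E*_3 W = E*_4 W = 0, i.e. W = E*_2 W.  Then each
    E*_i(x) acts on W as a scalar, so any eigenvector of A in W spans a submodule,
    and irreducibility forces dim W = 1. *)

From mathcomp Require Import all_boot all_order all_algebra all_field.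
From mathcomp Require Import zify.
Set Implicit Arguments. Unset Strict Implicit. Unset Printing Implicit Defensive.
Import GRing.Theory Num.Theory.

Section Balls.
Variables (X : finType) (e : rel X).
Local Notation d := (gdist e).

Lemma ball_step k x y z : y \in ball e k x -> e y z -> z \in ball e k.+1 x.
Proof.
by move=> yk yz; rewrite inE; apply/orP; right; rewrite inE; apply/existsP; exists y; rewrite yk.
Qed.

Lemma ball_subS k x : ball e k x \subset ball e k.+1 x.
Proof. exact: subsetUl. Qed.

Lemma path_ball x p : path e x p -> last x p \in ball e (size p) x.
Proof.
elim/last_ind: p => [|p y IH]; first by rewrite inE.
rewrite rcons_path last_rcons size_rcons => /andP[/IH py pyy].
exact: ball_step py pyy.
Qed.

Lemma ball_cat j k x y z : y \in ball e j x -> z \in ball e k y -> z \in ball e (j + k) x.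
Proof.
move=> yj; elim: k z => [|k IH] z; first by rewrite inE addn0 => /eqP ->.
rewrite addnS inE => /orP[/IH zjk | ]; first exact: subsetP (ball_subS _ _) _ zjk.
by rewrite inE => /existsP[t /andP[/IH tjk tz]]; apply: ball_step tjk tz.
Qed.

Lemma gdist_le_size x y : d x y <= #|X|.
Proof. by rewrite /gdist -[leqRHS](size_iota 0) find_size. Qed.

Lemma gdist_le k x y : y \in ball e k x -> d x y <= k.
Proof.
move=> yk; have [k_lt | ] := ltnP k #|X|; last exact: leq_trans (gdist_le_size x y).
rewrite leqNgt; apply/negP => /(before_find 0).
by rewrite nth_iota // add0n yk.
Qed.

Lemma mem_ball_gdist x y : d x y < #|X| -> y \in ball e (d x y) x.
Proof.
move=> lt_dX; have has_k : has (fun k => y \in ball e k x) (iota 0 #|X|).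
  by rewrite has_find size_iota.
by have := nth_find 0 has_k; rewrite nth_iota ?add0n.
Qed.

Lemma connect_gdist_lt x y : connect e x y -> d x y < #|X|.
Proof.
move=> /connectP[p ep ->]; case/shortenP: ep => q eq uq _.
have : size (x :: q) <= #|X| by rewrite -(card_uniqP uq) max_card.
exact: leq_ltn_trans (gdist_le (path_ball eq)).
Qed.

End Balls.

Lemma card_set_sum (T : finType) (P : pred T) : #|[set z | P z]| = \sum_z P z.
Proof. by rewrite -sum1_card big_mkcond /=; apply: eq_bigr => z _; rewrite inE; case: (P z). Qed.

Section Graph.
Variables (X : finType) (e : rel X).
Hypotheses (e_sym : symmetric e) (e_irr : irreflexive e) (e_conn : forall x y, connect e x y).
Local Notation d := (gdist e).

Lemma mem_ball x y : y \in ball e (d x y) x.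
Proof. exact/mem_ball_gdist/connect_gdist_lt/e_conn. Qed.

Lemma gdist_leP k x y : reflect (d x y <= k) (y \in ball e k x).
Proof.
apply: (iffP idP); first exact: gdist_le.
move=> le_dk; rewrite -(subnKC le_dk); elim: (k - _) => [|j IH]; first by rewrite addn0 mem_ball.
by rewrite addnS; apply: subsetP (ball_subS _ _ _) _ IH.
Qed.

Lemma gdistxx x : d x x = 0.
Proof. by apply/eqP; rewrite -leqn0; apply/gdist_leP; rewrite inE. Qed.

Lemma gdist_eq0 x y : (d x y == 0) = (x == y).
Proof.
apply/idP/eqP => [|<-]; last by rewrite gdistxx.
by rewrite -leqn0 => /gdist_leP; rewrite inE eq_sym => /eqP.
Qed.

Lemma ball_sym k x y : y \in ball e k x -> x \in ball e k y.
Proof.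
elim: k y => [|k IH] y; first by rewrite !inE eq_sym.
rewrite inE => /orP[/IH | ]; first exact: subsetP (ball_subS _ _ _) _.
rewrite inE => /existsP[t /andP[/IH xt ty]].
have ty1 : t \in ball e 1 y by apply: (@ball_step _ _ 0 y y); rewrite ?inE // e_sym.
by rewrite -add1n; apply: ball_cat ty1 xt.
Qed.

Lemma gdistC x y : d x y = d y x.
Proof.
by apply/eqP; rewrite eqn_leq; apply/andP; split; apply/gdist_leP/ball_sym/mem_ball.
Qed.

Lemma gdist_edge x y z : e y z -> d x z <= (d x y).+1.
Proof. by move=> yz; apply/gdist_leP/(ball_step (mem_ball x y) yz). Qed.

Lemma gdist_edge_bounds x y z : e y z -> d x z <= (d x y).+1 /\ d x y <= (d x z).+1.
Proof. by move=> yz; split; apply: gdist_edge; rewrite // e_sym. Qed.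

Lemma gdist_eq1 x y : (d x y == 1) = e x y.
Proof.
apply/idP/idP => [/eqP dxy1 | xy].
  have : y \in ball e 1 x by rewrite -dxy1 mem_ball.
  rewrite inE => /orP[].
    by rewrite inE => /eqP yx; move: dxy1; rewrite yx gdistxx.
  by rewrite inE => /existsP[t /andP[]]; rewrite inE => /eqP ->.
have := gdist_edge x xy; rewrite gdistxx eqn_leq => -> /=.
by rewrite lt0n gdist_eq0; apply: contraTneq xy => <-; rewrite e_irr.
Qed.

Lemma gdist_pred_nbr x y : 0 < d x y -> exists2 z, e z y & d x z = (d x y).-1.
Proof.
move=> dxy_gt0; have : y \in ball e (d x y).-1.+1 x by rewrite prednK ?mem_ball.
rewrite inE => /orP[]; first by move/gdist_le; lia.
rewrite inE => /existsP[z /andP[/gdist_le le_dxz zy]]; exists z => //.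
by have := gdist_edge x zy; lia.
Qed.

Definition sphere x i := [set y | d x y == i].

Lemma card_sphere0 x : #|sphere x 0| = 1.
Proof. by rewrite -(cards1 x); apply: eq_card => y; rewrite !inE gdist_eq0 eq_sym. Qed.

Definition distmx i : 'M[algC]_#|X| :=
  (\matrix_(u, v) (d (enum_val u) (enum_val v) == i)%:R)%R.

Lemma distmx0 : distmx 0 = 1%:M%R.
Proof. by apply/matrixP => u v; rewrite !mxE gdist_eq0 (inj_eq enum_val_inj). Qed.

Lemma distmx1 : distmx 1 = adjA e.
Proof. by apply/matrixP => u v; rewrite !mxE gdist_eq1. Qed.

Lemma mulmx_Estar x i (M : 'M[algC]_#|X|) u v :
  ((M *m Estar e x i) u v = M u v * (d x (enum_val v) == i)%:R)%R.
Proof.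
rewrite mxE (bigD1 v) //= big1 => [|w /negPf ne_wv]; last by rewrite mxE ne_wv mulr0.
by rewrite mxE eqxx addr0.
Qed.

Section DistanceRegular.
Variables (D : nat) (b c : nat -> nat).
Hypothesis gdist_le_diam : forall x y, d x y <= D.
Hypothesis diam_attained : exists x y, d x y = D.
Hypothesis regular : forall i x y, d x y = i ->
  (i < D -> #|[set z | e y z & d x z == i.+1]| = b i) /\
  (0 < i -> #|[set z | e y z & d x z == i.-1]| = c i).

Lemma card_nbr_succ x y : d x y < D -> #|[set z | e y z & d x z == (d x y).+1]| = b (d x y).
Proof. by case: (regular (erefl (d x y))) => + _; apply. Qed.

Lemma card_nbr_pred x y : 0 < d x y -> #|[set z | e y z & d x z == (d x y).-1]| = c (d x y).
Proof. by case: (regular (erefl (d x y))) => _; apply. Qed.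

Lemma card_nbr y : 0 < D -> #|[set z | e y z]| = b 0.
Proof.
move=> D_gt0; rewrite -(gdistxx y) -card_nbr_succ gdistxx //.
by apply: eq_card => z; rewrite !inE gdist_eq1 andbb.
Qed.

Lemma exists_gdist i : i <= D -> exists x y, d x y = i.
Proof.
move=> le_iD; rewrite -(subKn le_iD); elim: (D - i) (leq_subr i D) => [|j IH] le_jD.
  by rewrite subn0.
have [x [y dxy]] := IH (ltnW le_jD).
have [|z _ dxz] := @gdist_pred_nbr x y; first by rewrite dxy subn_gt0.
by exists x, z; rewrite dxz dxy subnS.
Qed.

Lemma b_c_gt0 i : i < D -> 0 < b i /\ 0 < c i.+1.
Proof.
move=> lt_iD; have [x [y dxy]] := exists_gdist lt_iD.
have [|z zy dxz] := @gdist_pred_nbr x y; first by rewrite dxy.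
rewrite dxy /= in dxz; split.
  rewrite -dxz -card_nbr_succ ?dxz //; apply/card_gt0P; exists y.
  by rewrite inE zy dxy eqxx.
rewrite -dxy -card_nbr_pred ?dxy //; apply/card_gt0P; exists z.
by rewrite inE e_sym zy dxz eqxx.
Qed.

Lemma card_nbr_same x y : 0 < d x y < D ->
  #|[set z | e y z & d x z == d x y]| = b 0 - b (d x y) - c (d x y).
Proof.
case/andP=> dxy_gt0 dxy_lt; rewrite -card_nbr_succ // -card_nbr_pred // -(card_nbr y); last lia.
rewrite !card_set_sum.
suff -> : (\sum_z e y z = \sum_z (e y z && (d x z == (d x y).+1))
    + \sum_z (e y z && (d x z == d x y)) + \sum_z (e y z && (d x z == (d x y).-1)))%N by lia.
rewrite -!big_split /=; apply: eq_bigr => z _.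
case yz: (e y z) => //=; have := gdist_edge_bounds x yz.
by do 3 case: eqP; lia.
Qed.

Lemma card_nbr_sphere x y i : 0 < i < D ->
  #|[set z | e y z & d x z == i]| = (d x y == i.-1) * b i.-1
     + (d x y == i) * (b 0 - b i - c i) + (d x y == i.+1) * c i.+1.
Proof.
case/andP=> i_gt0 lt_iD.
have [dxy | ne_pred] := eqVneq (d x y) i.-1.
  have {1}-> : i = (d x y).+1 by lia.
  rewrite card_nbr_succ; last lia.
  rewrite dxy; lia.
have [dxy | ne_i] := eqVneq (d x y) i.
  by rewrite -{1}dxy card_nbr_same dxy ?i_gt0 //; lia.
have [dxy | ne_succ] := eqVneq (d x y) i.+1.
  have {1}-> : i = (d x y).-1 by rewrite dxy.
  by rewrite card_nbr_pred dxy //; lia.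
suff /eq_card0 -> : [set z | e y z & d x z == i] =i pred0 by lia.
move=> z; rewrite !inE; apply/andP=> -[yz /eqP dxz]; have := gdist_edge_bounds x yz.
by rewrite dxz; lia.
Qed.

Lemma card_sphereS x i : i < D -> #|sphere x i| * b i = #|sphere x i.+1| * c i.+1.
Proof.
move=> lt_iD; rewrite !card_set_sum !big_distrl /=.
transitivity (\sum_y \sum_z (e y z && (d x y == i) && (d x z == i.+1))).
  apply: eq_bigr => y _; case: eqP => [dxy | _]; last by rewrite mul0n big1 // => z; rewrite andbF.
  by rewrite mul1n -dxy -card_nbr_succ ?dxy // card_set_sum; apply: eq_bigr => z; rewrite andbT.
rewrite exchange_big; apply: eq_bigr => z _ /=.
case: eqP => [dxz | _]; last by rewrite mul0n big1 // => y; rewrite andbF.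
rewrite mul1n -dxz -card_nbr_pred dxz // card_set_sum.
by apply: eq_bigr => y _; rewrite andbT e_sym.
Qed.

Lemma card_sphere_prod x i : i <= D ->
  #|sphere x i| * \prod_(j < i) c j.+1 = \prod_(j < i) b j.
Proof.
elim: i => [|i IH] lt_iD; first by rewrite !big_ord0 card_sphere0.
by rewrite !big_ord_recr /= mulnA mulnAC -card_sphereS // -(IH (ltnW lt_iD)) mulnAC.
Qed.

Lemma card_sphere_diam x : (forall i, i < D -> c i.+1 = b (D - i.+1)) -> #|sphere x D| = 1.
Proof.
move=> c_rev; have := card_sphere_prod x (leqnn D).
have -> : \prod_(j < D) c j.+1 = \prod_(j < D) b j.
  by rewrite [RHS](reindex_inj rev_ord_inj); apply: eq_bigr => j _; apply: c_rev.
have : 0 < \prod_(j < D) b j by rewrite prodn_gt0 // => j; case: (b_c_gt0 (ltn_ord j)).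
by move=> P_gt0; rewrite -[RHS]mul1n => /eqP; rewrite eqn_pmul2r // => /eqP.
Qed.

Lemma adjA_distmx i : 0 < i < D -> (adjA e *m distmx i =
  (b i.-1)%:R *: distmx i.-1 + (b 0 - b i - c i)%:R *: distmx i + (c i.+1)%:R *: distmx i.+1)%R.
Proof.
move=> i_range; apply/matrixP => u v; rewrite mxE.
pose F z := ((e (enum_val u) z && (d (enum_val v) z == i))%:R : algC)%R.
transitivity (\sum_(w < #|X|) F (enum_val w))%R.
  by apply: eq_bigr => w _; rewrite !mxE /F gdistC -natrM mulnb.
rewrite -big_enum_val /= -natr_sum -card_set_sum card_nbr_sphere // [d (enum_val v) _]gdistC.
by rewrite !mxE !natrD !natrM !(mulrC _ (_ == _)%:R%R).
Qed.

Lemma distmx_in_T x i : in_T e x (distmx i).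
Proof.
suff /(_ i)[] : forall j, in_T e x (distmx j) /\ in_T e x (distmx j.+1) by [].
elim=> {i} [|i [Ti TiS]]; first by rewrite distmx0 distmx1; split; constructor.
split=> //; have [lt_iSD | le_Di] := ltnP i.+1 D; last first.
  have -> : distmx i.+2 = (0 *: 1%:M)%R.
    apply/matrixP => u v; rewrite !mxE mul0r.
    by have := gdist_le_diam (enum_val u) (enum_val v); case: eqP => // ->; lia.
  by do 2!constructor.
have c_neq0 : ((c i.+2)%:R != 0 :> algC)%R by rewrite pnatr_eq0 -lt0n; case: (b_c_gt0 lt_iSD).
have -> : distmx i.+2 = ((c i.+2)%:R^-1 *: (adjA e *m distmx i.+1
    + (-1) *: ((b i)%:R *: distmx i) + (-1) *: ((b 0 - b i.+1 - c i.+1)%:R *: distmx i.+1)))%R.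
  by rewrite adjA_distmx //= !scaleN1r -addrA -opprD addrAC subrr add0r scalerA mulVf ?scale1r.
by repeat (assumption || constructor).
Qed.

Section Antipodal.
Hypothesis card_sphere_diam1 : forall x, #|sphere x D| = 1.

Definition antipode x := odflt x [pick y in sphere x D].

Lemma gdist_diamE x y : (d x y == D) = (y == antipode x).
Proof.
have /eqP/cards1P[z Sz] := card_sphere_diam1 x.
have -> : antipode x = z.
  by rewrite /antipode Sz; case: pickP => [w | /(_ z)]; rewrite !inE ?eqxx // => /eqP.
by rewrite -[RHS]in_set1 -Sz inE.
Qed.

Lemma gdist_antipode x : d x (antipode x) = D.
Proof. by apply/eqP; rewrite gdist_diamE. Qed.

Lemma antipodeK : involutive antipode.
Proof. by move=> x; apply/esym/eqP; rewrite -gdist_diamE gdistC gdist_diamE. Qed.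

Lemma gdist_antipode_eq0 x y : (d x (antipode y) == 0) = (d x y == D).
Proof. by rewrite gdist_eq0 [d x y]gdistC gdist_diamE. Qed.

Lemma gdist_antipode_eq1 x y : 0 < D -> (d x (antipode y) == 1) = (d x y == D.-1).
Proof.
move=> D_gt0; rewrite gdistC [d x y]gdistC gdist_eq1; apply/idP/eqP => [ay_x | dyx].
  have [_] := gdist_edge_bounds y ay_x; rewrite gdist_antipode.
  have := gdist_le_diam y x; rewrite leq_eqVlt => /orP[|]; last lia.
  by rewrite gdist_diamE => /eqP xE; rewrite xE e_irr in ay_x.
have /card_gt0P[z] : 0 < #|[set z | e x z & d y z == (d y x).+1]|.
  have lt_D1D : D.-1 < D by rewrite ltn_predL.
  by rewrite card_nbr_succ dyx //; case: (b_c_gt0 lt_D1D).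
by rewrite inE dyx prednK // gdist_diamE => /andP[xz /eqP <-]; rewrite e_sym.
Qed.

Lemma Estar_conj_distmx x i j : (forall y, (d x (antipode y) == i) = (d x y == j)) ->
  Estar e x j = (distmx D *m Estar e x i *m distmx D)%R.
Proof.
move=> Eij; apply/matrixP => u v.
rewrite [RHS]mxE (bigD1 (enum_rank (antipode (enum_val u)))) //= big1 => [|w /negPf ne_w].
  rewrite mulmx_Estar !mxE enum_rankK gdist_antipode eqxx mul1r Eij gdist_diamE antipodeK.
  by rewrite (inj_eq enum_val_inj) addr0 -natrM mulnb andbC (eq_sym v).
by rewrite mulmx_Estar !mxE gdist_diamE (can2_eq enum_valK enum_rankK) ne_w !mul0r.
Qed.

End Antipodal.
End DistanceRegular.
End Graph.

Section TerwilligerModule.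
Variables (X : finType) (e : rel X) (x : X).
Local Open Scope ring_scope.
Implicit Types W : 'M[algC]_#|X|.

Lemma stablemx_eigenvector n (W A : 'M[algC]_n) : W != 0 -> stablemx W A ->
  exists2 w : 'rV_n, (w <= W)%MS & (w != 0) && stablemx w A.
Proof.
move=> W_neq0 WA; have rW_gt0 : (0 < \rank W)%N by rewrite lt0n mxrank_eq0.
have [a /eigenvalueP[v vA v_neq0]] := eigenvalue_closed (restrictmx W A) rW_gt0.
exists (v *m row_base W); first by rewrite (submx_trans (submxMl _ _)) ?eq_row_base.
rewrite mulmx_free_eq0 ?row_base_free // v_neq0; apply/eigenvectorP; exists a.
by rewrite -sub_eigenspace_conjmx ?stablemx_row_base ?row_base_free //; apply/eigenspaceP.
Qed.

Lemma T_invariant_gen W : stablemx W (adjA e)^T ->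
  (forall i, (i <= 4)%N -> stablemx W (Estar e x i)^T) -> T_invariant e x W.
Proof.
move=> WA WE M; elim=> {M} [|i /WE //| | M N _ WM _ WN | a M _ WM | M N _ WM _ WN] //.
- by rewrite trmx1 mulmx1.
- by rewrite linearD mulmxDr addmx_sub.
- by rewrite linearZ -scalemxAr scalemx_sub.
- by rewrite trmx_mul mulmxA (submx_trans (submxMr _ WN)).
Qed.

Lemma EW_conj W P i j : T_invariant e x W -> in_T e x P ->
  Estar e x j = P *m Estar e x i *m P -> EW e x W i = 0 -> EW e x W j = 0.
Proof.
move=> WT TP Ej EWi; apply/eqP; rewrite -submx0 /EW Ej !trmx_mul !mulmxA.
by rewrite (submx_trans (submxMr _ (submxMr _ (WT _ TP)))) // -/(EW e x W i) EWi mul0mx.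
Qed.

Lemma sum_Estar D : (forall y, (gdist e x y <= D)%N) -> \sum_(i < D.+1) Estar e x i = 1%:M.
Proof.
move=> le_dD; apply/matrixP => u v; rewrite summxE mxE.
have [<-{v} | /negPf ne_uv] := eqVneq u v; last by rewrite big1 // => i _; rewrite mxE ne_uv.
have lt_dD : (gdist e x (enum_val u) < D.+1)%N by rewrite ltnS.
rewrite (bigD1 (Ordinal lt_dD)) //= big1 => [|i ne_i]; first by rewrite mxE !eqxx addr0.
rewrite mxE eqxx /=; apply/eqP; rewrite pnatr_eq0 eqb0.
by apply: contraNneq ne_i => dE; apply/eqP/val_inj; rewrite /= dE.
Qed.

Lemma EW_single W D h : (forall y, (gdist e x y <= D)%N) -> (h <= D)%N ->
  (forall i, (i <= D)%N -> i != h -> EW e x W i = 0) -> EW e x W h = W.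
Proof.
move=> le_dD le_hD EW0; rewrite -[RHS]mulmx1 -trmx1 -(sum_Estar le_dD) linear_sum mulmx_sumr.
rewrite (bigD1 (Ordinal (le_hD : (h < D.+1)%N))) //= big1 ?addr0 // => i ne_ih.
by apply: EW0; [rewrite -ltnS | apply: contraNneq ne_ih => ih; apply/eqP/val_inj].
Qed.

Lemma endpointP W h : endpoint e x W = h -> (h <= 4)%N ->
  (forall i, (i < h)%N -> EW e x W i = 0) /\ EW e x W h != 0.
Proof.
rewrite /endpoint => <- le_h4; split=> [i lt_ih | ].
  have lt_i5 : (i < 5)%N by lia.
  by have := before_find 0 lt_ih; rewrite nth_iota // add0n => /negbFE/eqP.
have has_nz : has (fun i => EW e x W i != 0) (iota 0 5) by rewrite has_find size_iota.
by have := nth_find 0 has_nz; rewrite nth_iota ?add0n.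
Qed.

Lemma irreducible_single_level W h : (forall y, (gdist e x y <= 4)%N) -> (h <= 4)%N ->
  irreducible_T_module e x W -> (forall i, (i <= 4)%N -> i != h -> EW e x W i = 0) ->
  module_diameter e x W = 0%N /\ thin e x W.
Proof.
move=> le_d4 le_h4 [W_neq0 WT W_irr] EW0; have EWh := EW_single le_d4 le_h4 EW0.
have rW_le1 : (\rank W <= 1)%N.
  have [w wW /andP[w_neq0 wA]] := stablemx_eigenvector W_neq0 (WT _ (T_A e x)).
  have wE i : (i <= 4)%N -> stablemx w (Estar e x i)^T.
    case/submxP: wW => r -> le_i4; rewrite -mulmxA -/(EW e x W i).
    by have [-> | /(EW0 i le_i4) ->] := eqVneq i h; rewrite ?EWh ?mulmx0 ?sub0mx.
  have wT : T_invariant e x <<w>>%MS.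
    by apply: T_invariant_gen => [|i /wE]; rewrite (eqmxMr _ (genmxE w)) genmxE.
  have [|w0 | /eqmx_rank <-] := W_irr _ wT; first by rewrite genmxE.
    by move: w_neq0; rewrite -mxrank_eq0 -genmxE w0 mxrank0.
  by rewrite genmxE rank_leq_row.
split; last by move=> i _; rewrite (leq_trans (mxrankM_maxl _ _)).
rewrite /module_diameter (@eq_in_filter _ _ (pred1 h)) ?filter_pred1_uniq ?iota_uniq ?mem_iota //.
move=> i; rewrite mem_iota => /andP[_ lt_i5] /=.
by have [-> | ne_ih] := eqVneq i h; rewrite ?EWh ?W_neq0 ?EW0 ?eqxx.
Qed.

End TerwilligerModule.

Theorem lemma8p3 (X : finType) (e : rel X) (p q : nat) (x : X)
    (W : 'M[algC]_#|X|) :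
  is_AT4 e p q ->
  irreducible_T_module e x W ->
  endpoint e x W = 2 ->
  module_diameter e x W = 0 /\ thin e x W.
Proof.
case=> _ _ _ [[e_sym e_irr] e_conn le_d4 diam4 regular] W_irr.
case/endpointP=> // EW_lt2 _; have [_ WT _] := W_irr.
have sphere4 y : #|sphere e y 4| = 1.
  by apply: card_sphere_diam e_sym e_conn _ _ _ diam4 regular y _ => -[|[|[|[|]]]].
have EW_antipode i j : (forall y, (gdist e x (antipode e 4 y) == i) = (gdist e x y == j)) ->
    EW e x W i = 0%R -> EW e x W j = 0%R.
  move=> Eij; apply: EW_conj WT (distmx_in_T e_sym e_irr e_conn le_d4 diam4 regular x 4) _.
  exact: Estar_conj_distmx e_sym e_conn _ sphere4 _ _ _ Eij.
have EW4 := EW_antipode _ _ (gdist_antipode_eq0 e_sym e_conn sphere4 x) (EW_lt2 0 isT).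
have EW3 := EW_antipode _ _
  (fun y => gdist_antipode_eq1 e_sym e_irr e_conn le_d4 diam4 regular sphere4 x y isT) (EW_lt2 1 isT).
apply: (@irreducible_single_level _ _ _ _ 2) (le_d4 x) _ W_irr _ => // i le_i4 ne_i2.
have [/EW_lt2 // | le_2i] := ltnP i 2.
by case: i le_i4 ne_i2 le_2i => [|[|[|[|[|]]]]].
Qed.
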